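(* Let $H$ be an additive subgroup of $\mathbb{R}^{n}$ with complex dimension $\widetilde{\mathrm{dim}}(H)=p+ir$. If $p+r<n$, then for every $u\in\mathbb{R}^{n}$ the group $H+\mathbb{Z}u$ is not dense in $\mathbb{R}^{n}$.
   Context: For an additive subgroup $G$ of $\mathbb{R}^n$, $\widetilde{\mathrm{dim}}(G):=p+i(q-p)$ where $p=\max\{\dim V: V\text{ a vector subspace of }\mathbb{R}^n,\ V\subset G\}$ and $q=\dim\mathrm{vect}(G)$, $\mathrm{vect}(G)$ being the real span of $G$. *)

(* R^n is 'rV[R]_n with R : realType,
   equipped with the product (matrix) topology from MathComp-Analysis. *)
From HB Require Import structures.
From mathcomp Require Import all_boot all_order all_algebra.
From mathcomp Require Import all_classical all_reals all_analysis.
Set Implicit Arguments. Unset Strict Implicit. Unset Printing Implicit Defensive.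
Import Order.TTheory GRing.Theory Num.Theory.
Import numFieldNormedType.Exports.
Local Open Scope classical_set_scope.
Local Open Scope ring_scope.

Section Defs.
Variables (R : realType) (n : nat).

Definition is_add_subgroup (H : set 'rV[R]_n) : Prop :=
  H 0 /\ forall x y, H x -> H y -> H (x - y).

(* A vector subspace of R^n is represented by (the row space of) a matrix V;
   its dimension is \rank V. *)
Definition subspace_in (H : set 'rV[R]_n) (V : 'M[R]_n) : Prop :=
  forall v : 'rV[R]_n, (v <= V)%MS -> H v.

Definition max_subspace_dim (H : set 'rV[R]_n) (p : nat) : Prop :=
  (exists V : 'M[R]_n, subspace_in H V /\ \rank V = p) /\
  (forall V : 'M[R]_n, subspace_in H V -> (\rank V <= p)%N).

Definition span_dim (H : set 'rV[R]_n) (q : nat) : Prop :=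
  (exists V : 'M[R]_n, (forall h, H h -> (h <= V)%MS) /\ \rank V = q) /\
  (forall V : 'M[R]_n, (forall h, H h -> (h <= V)%MS) -> (q <= \rank V)%N).

(* complex dimension  dim~(H) = p + i r  with r = q - p, encoded as the pair (p, r) *)
Definition cdim (H : set 'rV[R]_n) (p r : nat) : Prop :=
  max_subspace_dim H p /\ exists q, span_dim H q /\ r = (q - p)%N.

Definition add_Zline (H : set 'rV[R]_n) (u : 'rV[R]_n) : set 'rV[R]_n :=
  [set x | exists h k, H h /\ x = h + (k%:~R : R) *: u].

End Defs.

(* H lies in vect(H), whose dimension q <= p + r is smaller than n, so some
   nonzero linear form g vanishes on H.  Then g maps H + Z u into the discrete
   set Z g(u), which misses an open interval in the (full) range of g; its
   preimage is a nonempty open set missing H + Z u. *)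
From mathcomp Require Import all_boot all_order all_algebra.
From mathcomp Require Import all_classical all_reals all_analysis.
From mathcomp Require Import zify ring lra.
Set Implicit Arguments. Unset Strict Implicit. Unset Printing Implicit Defensive.
Import numFieldNormedType.Exports.
Import Order.TTheory GRing.Theory Num.Theory.
Local Open Scope classical_set_scope.
Local Open Scope ring_scope.

Lemma continuous_preimage_not_dense (T : topologicalType) (K : numFieldType)
    (S : set T) (g : T -> K) (U : set K) :
  continuous g -> open U -> (exists x, U (g x)) ->
  (forall x, S x -> ~ U (g x)) -> ~ dense S.
Proof.
move=> g_cont U_open [x0 Ux0] SU S_dense.
case: (S_dense (g @^-1` U)).
- by exists x0.
- by apply: open_comp => // x _; apply: g_cont.
- by move=> x [/= Ugx Sx]; apply: SU Sx Ugx.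
Qed.

Lemma int_multiples_miss_ball (R : realFieldType) (a : R) :
  exists c d, 0 < d /\ forall k : int, ~ ball c d (k%:~R * a).
Proof.
have [->|a_neq0] := eqVneq a 0.
  exists 1, (1 / 2); split=> [|k]; first lra.
  by rewrite mulr0 -ball_normE /= subr0 normr1; lra.
(* the midpoint of [0, a] is at distance at least |a|/2 from every multiple of a *)
exists (a / 2), (`|a| / 2); split=> [|k]; first by rewrite divr_gt0 ?normr_gt0.
rewrite -ball_normE /=.
have -> : a / 2 - k%:~R * a = a * (1 / 2 - k%:~R) by ring.
rewrite normrM ltr_pM2l ?normr_gt0 //; apply/negP; rewrite -leNgt.
have [k_le0|k_gt0] := lerP k 0.
  have : (k%:~R : R) <= 0 by rewrite lerz0.
  by move=> ?; rewrite ger0_norm; lra.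
have : (1 : R) <= k%:~R by rewrite ler1z.
by move=> ?; rewrite ler0_norm; lra.
Qed.

Lemma rank_lt_exists_annihilator (F : fieldType) (n : nat) (V : 'M[F]_n) :
  (\rank V < n)%N ->
  exists2 c : 'cV[F]_n, c != 0 & forall v : 'rV_n, (v <= V)%MS -> v *m c = 0.
Proof.
move=> rankV.
have /matrix0Pn [i [j Cij]] : cokermx V != 0.
  by apply: contraTneq rankV => C0; rewrite -leqNgt -subn_eq0 -mxrank_coker C0 mxrank0.
exists (col j (cokermx V)); first by apply/cV0Pn; exists i; rewrite mxE.
by move=> v; rewrite submxE => /eqP vC0; rewrite colE mulmxA vC0 mul0mx.
Qed.

Lemma exists_mulmx_coord1 (F : fieldType) (n : nat) (c : 'cV[F]_n) :
  c != 0 -> exists w : 'rV_n, (w *m c) 0 0 = 1.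
Proof.
move=> /cV0Pn [i ci_neq0]; exists ((c i 0)^-1 *: delta_mx 0 i).
by rewrite -scalemxAl -rowE !mxE mulVf.
Qed.

Lemma continuous_mulmx_coord (R : realType) (n : nat) (c : 'cV[R]_n) :
  continuous (fun x : 'rV[R]_n => (x *m c) 0 0).
Proof.
have -> : (fun x : 'rV[R]_n => (x *m c) 0 0) = fun x => \sum_i x 0 i * c i 0.
  by apply: funext => x; rewrite mxE.
apply: (continuous_big add_continuous) => i _ x.
by apply: continuousM; [exact: coord_continuous | exact: cst_continuous].
Qed.

Lemma add_Zline_not_dense (R : realType) (n : nat) (H : set 'rV[R]_n)
    (V : 'M[R]_n) (u : 'rV[R]_n) :
  (forall h, H h -> (h <= V)%MS) -> (\rank V < n)%N -> ~ dense (add_Zline H u).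
Proof.
move=> HV rankV.
have [c c_neq0 Vc0] := rank_lt_exists_annihilator rankV.
have [w wc1] := exists_mulmx_coord1 c_neq0.
pose g (x : 'rV[R]_n) := (x *m c) 0 0.
have g_Zline h (k : int) : H h -> g (h + k%:~R *: u) = k%:~R * g u.
  by move=> /HV /Vc0 hc0; rewrite /g mulmxDl -scalemxAl hc0 add0r mxE.
have [c0 [d [d_gt0 Zg_miss]]] := int_multiples_miss_ball (g u).
apply: (continuous_preimage_not_dense (g := g) (U := ball c0 d)).
- exact: continuous_mulmx_coord.
- exact: ball_open.
- exists (c0 *: w); rewrite /g -scalemxAl mxE wc1 mulr1; exact: ballxx d_gt0.
- by move=> _ [h [k [Hh ->]]]; rewrite g_Zline.
Qed.

Theorem corollary1p7 (R : realType) (n : nat) (H : set 'rV[R]_n) (p r : nat) :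
  is_add_subgroup H -> cdim H p r -> (p + r < n)%N ->
  forall u : 'rV[R]_n, ~ dense (add_Zline H u).
Proof.
move=> _ [_ [q [[[V [HV rankV]] _] ->]]] prn u.
have rankV_lt_n : (\rank V < n)%N by rewrite rankV; lia.
exact: add_Zline_not_dense HV rankV_lt_n.
Qed.
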